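(* Let $\mathbb{K}$ be a field, let $P_1, P_2 \in \mathbb{K}[X]$ be irreducible, and let $f : \mathbb{K}[X]/(P_1) \to \mathbb{K}[X]/(P_2)$ be a ring isomorphism stabilizing $\mathbb{K}$. Then $S_f$ is coprime to $P_2$ if and only if $Q_f' \neq 0$.
   Context: A ring homomorphism $f : A \to B$ between $\mathbb{K}$-algebras stabilizes $\mathbb{K}$ if there is a field automorphism $\sigma_f$ of $\mathbb{K}$ with $f(a) = \sigma_f(a)$ for all $a \in \mathbb{K}$. For a field automorphism $\sigma$ of $\mathbb{K}$, $\sigma^X$ is the ring automorphism of $\mathbb{K}[X]$ applying $\sigma$ to coefficients; $A\circ Q$ denotes $A(Q(X))$; $'$ denotes the formal derivative. For a ring isomorphism $f : \mathbb{K}[X]/(P_1) \to \mathbb{K}[X]/(P_2)$ stabilizing $\mathbb{K}$: $Q_f$ is the unique polynomial of degree $< \deg P_2$ such that $f$ sends the class of $X$ to the class of $Q_f$, and $S_f \in \mathbb{K}[X]$ is the polynomial with $\sigma_f^X(P_1)\circ Q_f = S_f P_2$ (it exists because $\sigma_f^X(P_1)\circ Q_f$ is divisible by $P_2$). *)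

From HB Require Import structures.
From mathcomp Require Import all_boot all_order all_algebra.
Set Implicit Arguments. Unset Strict Implicit. Unset Printing Implicit Defensive.
Import GRing.Theory.
Local Open Scope ring_scope.

(* MathComp's quotient ring {poly %/ h} (qpoly.v) is K[X]/(h) only for h monic
   of size > 1; since (P) = (c P) for c a nonzero constant, K[X]/(P) is
   modelled as {poly %/ monicize P}, with monicize P = (lead_coef P)^-1 *: P. *)
Definition monicize (K : fieldType) (P : {poly K}) : {poly K} :=
  (lead_coef P)^-1 *: P.

Notation quotK P := {poly %/ monicize P}.

Definition stabilizes_via (K : fieldType) (P1 P2 : {poly K})
  (f : quotK P1 -> quotK P2) (sigma : K -> K) : Prop :=
  forall a : K, f (qpolyC (monicize P1) a) = qpolyC (monicize P2) (sigma a).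

(* Q_f : the representative of degree < deg P2 of f (class of X). Elements of
   {poly %/ h} are exactly the polynomials of size < size h (= size P2). *)
Definition Qf (K : fieldType) (P1 P2 : {poly K}) (f : quotK P1 -> quotK P2)
  : {poly K} := polyn (f (qpolyX (monicize P1))).

(* S_f : the polynomial with  sigma^X(P1) o Q_f = S_f * P2  (exact quotient). *)
Definition Sf (K : fieldType) (P1 P2 : {poly K}) (f : quotK P1 -> quotK P2)
  (sigma : K -> K) : {poly K} :=
  (map_poly sigma P1 \Po Qf f) %/ P2.

From HB Require Import structures.
From mathcomp Require Import all_boot all_order all_algebra.
From mathcomp Require Import ring.
Set Implicit Arguments. Unset Strict Implicit. Unset Printing Implicit Defensive.
Import GRing.Theory.
Local Open Scope ring_scope.

(* Let P = sigma^X(P1), let R represent f^-1 (class of X) and T = sigma^X(R),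
   so that P o Q = S P2 and T o Q = X + U P2; since f is injective, P2 divides
   sigma^X(A) o Q exactly when P1 divides A.
   If Q' = 0, differentiating T o Q gives 1 + U' P2 + U P2' = 0, so P2' <> 0,
   and differentiating S P2 = P o Q shows that P2 divides S P2', hence S.
   If Q' <> 0 and P2 divides S, then P2^2 divides P o Q, so P2 divides
   (P o Q)' = (P' o Q) Q', hence P' o Q, and P1' = 0.  Moreover P divides
   P2 o T, and P2 o (T o Q) = P2 (T o Q)' modulo P2^2, so P2 divides (T o Q)'
   and likewise R' = 0.  Differentiating sigma^-1(Q) o R = X modulo P1 with
   P1' = R' = 0 then gives the absurd P1 | 1. *)

Section PolyDeriv.
Variable K : fieldType.
Implicit Types A B C H P Q S T : {poly K}.

Lemma dvdp_comp_sub A B C : B - C %| (A \Po B) - (A \Po C).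
Proof.
elim/poly_ind: A => [|A c IH]; first by rewrite !comp_poly0 subrr dvdp0.
rewrite !comp_poly_MXaddC.
have -> : (A \Po B) * B + c%:P - ((A \Po C) * C + c%:P)
   = ((A \Po B) - (A \Po C)) * B + (A \Po C) * (B - C) by ring.
by apply: dvdp_add; [apply: dvdp_mulr | apply: dvdp_mulIr].
Qed.

Lemma comp_poly_XaddE A H :
  exists W, A \Po ('X + H) = A + H * A^`() + H ^+ 2 * W.
Proof.
elim/poly_ind: A => [|A c [W IH]]; first by exists 0; rewrite comp_poly0 deriv0; ring.
exists (A^`() + W * ('X + H)).
by rewrite derivMXaddC comp_poly_MXaddC IH; ring.
Qed.

(* Expand P o ('X + U P) to second order. *)
Lemma dvdp_sqr_comp_deriv P B :
  P %| B - 'X -> P ^+ 2 %| (P \Po B) - P * B^`().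
Proof.
move=> PB; have [U ->] : exists U, B = 'X + U * P.
  by exists ((B - 'X) %/ P); rewrite divpK //; ring.
have [W ->] := comp_poly_XaddE P (U * P).
rewrite derivD derivX derivM.
have -> : P + U * P * P^`() + (U * P) ^+ 2 * W - P * (1 + (U^`() * P + U * P^`()))
    = P ^+ 2 * (U ^+ 2 * W - U^`()) by ring.
exact: dvdp_mulIl.
Qed.

Lemma dvdp_deriv_sqr P B : P ^+ 2 %| B -> P %| B^`().
Proof.
move=> PB; rewrite -(divpK PB) expr2 mulrA derivM.
by apply: dvdp_add; [apply: dvdp_mulIr | apply/dvdp_mulr/dvdp_mulIr].
Qed.

Lemma dvdp_deriv_eq0 P A : (size A <= size P)%N -> P %| A^`() -> A^`() = 0.
Proof.
move=> sAP PA; have [->|A0] := eqVneq A 0; first by rewrite deriv0.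
apply/eqP; apply: contraTT PA => A'0; apply/negP => /(dvdp_leq A'0).
by rewrite leqNgt (leq_trans (lt_size_deriv A0) sAP).
Qed.

Lemma deriv_neq0_of_dvdp_comp_subX P T Q :
  (1 < size P)%N -> P^`() = 0 -> P %| (T \Po Q) - 'X -> Q^`() != 0.
Proof.
move=> sP P'0 PTQ; apply/eqP => Q'0.
have : P %| (T \Po Q - 'X)^`().
  by rewrite -(divpK PTQ) derivM P'0 mulr0 addr0 dvdp_mulIr.
rewrite derivB deriv_comp Q'0 mulr0 derivX sub0r dvdpNr dvdp1.
by rewrite gtn_eqF.
Qed.

Lemma coprimep_deriv P A :
  irreducible_poly P -> (size A <= size P)%N -> A^`() != 0 -> coprimep P A^`().
Proof.
move=> irrP sAP A'0; rewrite irreducible_poly_coprime //.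
by apply: contra A'0 => /(dvdp_deriv_eq0 sAP) ->.
Qed.

Lemma dvdp_of_deriv_mul_eq0 P S :
  irreducible_poly P -> P^`() != 0 -> (S * P)^`() = 0 -> P %| S.
Proof.
move=> irrP P'0 SP'0.
have : P %| S * P^`().
  by rewrite -(dvdp_addr _ (dvdp_mulIr S^`() P)) -derivM SP'0 dvdp0.
by rewrite Gauss_dvdpl // coprimep_deriv.
Qed.

End PolyDeriv.

Section QuotientRing.
Variable K : fieldType.

Lemma in_qpoly_polyn (h : {poly K}) (y : {poly %/ h}) : in_qpoly h (polyn y) = y.
Proof. exact/val_inj/in_qpoly_small/size_mk_monic. Qed.

Lemma in_qpoly_polyC (h : {poly K}) c : in_qpoly h c%:P = qpolyC h c.
Proof.
apply/val_inj/in_qpoly_small.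
exact: leq_ltn_trans (size_polyC_leq1 c) (size_mk_monic_gt1 h).
Qed.

Lemma rmorph_in_qpoly (h1 h2 : {poly K})
    (f : {rmorphism {poly %/ h1} -> {poly %/ h2}}) (sigma : {rmorphism K -> K}) :
    (forall a, f (qpolyC h1 a) = qpolyC h2 (sigma a)) ->
  forall A, f (in_qpoly h1 A)
            = in_qpoly h2 (map_poly sigma A \Po polyn (f (qpolyX h1))).
Proof.
move=> fC; elim/poly_ind => [|A c IH]; first by rewrite map_poly0 comp_poly0 !raddf0.
rewrite !rmorphD !rmorphM /= !in_qpoly_polyC fC IH map_polyX map_polyC /=.
by rewrite comp_polyX comp_polyC in_qpoly_polyC in_qpoly_polyn.
Qed.

Variable P : {poly K}.
Hypothesis P_gt1 : (1 < size P)%N.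

Let lead_coefV_neq0 : (lead_coef P)^-1 != 0.
Proof. by rewrite invr_eq0 lead_coef_eq0 -size_poly_gt0 ltnW. Qed.

Lemma size_monicize : size (monicize P) = size P.
Proof. exact: size_scale lead_coefV_neq0. Qed.

Lemma mk_monic_monicize : mk_monic (monicize P) = monicize P.
Proof.
rewrite /mk_monic size_monicize P_gt1 monicE lead_coefZ mulVf ?eqxx //.
by rewrite -invr_eq0 lead_coefV_neq0.
Qed.

Lemma in_qpoly_monicize_eq0 A : (in_qpoly (monicize P) A == 0) = (P %| A).
Proof.
rewrite -val_eqE /= -(Pdiv.IdomainMonic.modpE (monic_mk_monic (monicize P)) A).
rewrite -/(dvdp _ _) mk_monic_monicize; apply: eqp_dvdl.
exact: eqp_scale lead_coefV_neq0.
Qed.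

Lemma size_polyn_quotK (y : quotK P) : (size (polyn y) < size P)%N.
Proof. by rewrite -size_monicize -{2}mk_monic_monicize size_mk_monic. Qed.

End QuotientRing.

Section StabilizingIsomorphism.
Variables (K : fieldType) (P1 P2 : {poly K}).
Hypotheses (P1_gt1 : (1 < size P1)%N) (P2_irr : irreducible_poly P2).
Variables (f : {rmorphism quotK P1 -> quotK P2}) (g : quotK P2 -> quotK P1).
Hypotheses (fK : cancel f g) (gK : cancel g f).
Variables (sigma : {rmorphism K -> K}) (tau : K -> K).
Hypotheses (f_stab : stabilizes_via f sigma) (tauK : cancel tau sigma).

Let P2_gt1 : (1 < size P2)%N := P2_irr.1.
Let sigma_tauK := map_polyK tauK (rmorph0 sigma).
Local Notation Q := (Qf f).
Local Notation R := (polyn (g (qpolyX (monicize P2)))).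

Lemma dvdp_comp_Qf A : (P2 %| map_poly sigma A \Po Q) = (P1 %| A).
Proof.
rewrite -!in_qpoly_monicize_eq0 // -(rmorph_in_qpoly f_stab).
exact/raddf_eq0/can_inj/fK.
Qed.

Lemma dvdp_deriv_comp_Qf A :
  coprimep P2 Q^`() -> (P2 %| (map_poly sigma A \Po Q)^`()) = (P1 %| A^`()).
Proof. by move=> cQ; rewrite deriv_comp Gauss_dvdpl // deriv_map dvdp_comp_Qf. Qed.

Lemma Sf_mulE : Sf f sigma * P2 = map_poly sigma P1 \Po Q.
Proof. by rewrite /Sf divpK // dvdp_comp_Qf. Qed.

Lemma dvdp_comp_R_Qf_subX : P2 %| (map_poly sigma R \Po Q) - 'X.
Proof.
rewrite -in_qpoly_monicize_eq0 // raddfB /= -(rmorph_in_qpoly f_stab).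
by rewrite in_qpoly_polyn gK subrr.
Qed.

Lemma dvdp_comp_comp_R_Qf (A : {poly K}) :
  P2 %| (A \Po (map_poly sigma R \Po Q)) - A.
Proof.
apply: dvdp_trans dvdp_comp_R_Qf_subX _.
by have := dvdp_comp_sub A (map_poly sigma R \Po Q) 'X; rewrite comp_polyXr.
Qed.

Lemma dvdp_comp_Qf_R_subX : P1 %| (map_poly tau Q \Po R) - 'X.
Proof.
rewrite -dvdp_comp_Qf rmorphB /= map_comp_poly sigma_tauK map_polyX.
by rewrite comp_polyB comp_polyX -comp_polyA dvdp_comp_comp_R_Qf.
Qed.

Lemma dvdp_comp_P2_R : map_poly sigma P1 %| P2 \Po map_poly sigma R.
Proof.
have -> : P2 \Po map_poly sigma R = map_poly sigma (map_poly tau P2 \Po R).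
  by rewrite map_comp_poly sigma_tauK.
rewrite dvdp_map -dvdp_comp_Qf map_comp_poly sigma_tauK -comp_polyA.
by rewrite -(subrK P2 (P2 \Po _)) dvdp_add ?dvdpp ?dvdp_comp_comp_R_Qf.
Qed.

Lemma deriv_Qf_neq0 : coprimep (Sf f sigma) P2 -> Q^`() != 0.
Proof.
move=> SP2; apply/eqP => Q'0.
have P2'0 : P2^`() != 0.
  apply/eqP => P2'0.
  have := deriv_neq0_of_dvdp_comp_subX P2_gt1 P2'0 dvdp_comp_R_Qf_subX.
  by rewrite Q'0 eqxx.
have P2S : P2 %| Sf f sigma.
  by apply: dvdp_of_deriv_mul_eq0 P2_irr P2'0 _; rewrite Sf_mulE deriv_comp Q'0 mulr0.
move: SP2; rewrite coprimep_sym => /(coprimep_dvdl P2S).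
by rewrite coprimepp gtn_eqF.
Qed.

Lemma coprimep_Sf : Q^`() != 0 -> coprimep (Sf f sigma) P2.
Proof.
move=> Q'0; rewrite coprimep_sym irreducible_poly_coprime //; apply/negP => P2S.
have cQ : coprimep P2 Q^`().
  exact: coprimep_deriv P2_irr (ltnW (size_polyn_quotK P2_gt1 _)) Q'0.
have P2sq : P2 ^+ 2 %| map_poly sigma P1 \Po Q.
  by rewrite -Sf_mulE expr2; apply: dvdp_mul P2S (dvdpp _).
have P1'0 : P1^`() = 0.
  apply: dvdp_deriv_eq0 (leqnn _) _.
  by rewrite -(dvdp_deriv_comp_Qf _ cQ); apply: dvdp_deriv_sqr.
have R'0 : R^`() = 0.
  apply: dvdp_deriv_eq0 (ltnW (size_polyn_quotK P1_gt1 _)) _.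
  have P2_neq0 : P2 != 0 by rewrite -size_poly_gt0 ltnW.
  rewrite -(dvdp_deriv_comp_Qf _ cQ) -(dvdp_mul2l _ _ P2_neq0) -expr2.
  have P2sq_comp : P2 ^+ 2 %| P2 \Po (map_poly sigma R \Po Q).
    by rewrite comp_polyA (dvdp_trans P2sq) ?dvdp_comp_poly ?dvdp_comp_P2_R.
  by rewrite -(dvdp_subr _ P2sq_comp) dvdp_sqr_comp_deriv ?dvdp_comp_R_Qf_subX.
have := deriv_neq0_of_dvdp_comp_subX P1_gt1 P1'0 dvdp_comp_Qf_R_subX.
by rewrite R'0 eqxx.
Qed.

End StabilizingIsomorphism.

Theorem mainTheorem12 (K : fieldType) (P1 P2 : {poly K})
  (hP1 : irreducible_poly P1) (hP2 : irreducible_poly P2)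
  (f : {rmorphism quotK P1 -> quotK P2}) (hf : bijective f)
  (sigma : {rmorphism K -> K}) (hsigma : bijective sigma)
  (hstab : stabilizes_via f sigma) :
  coprimep (Sf f sigma) P2 <-> (Qf f)^`() != 0.
Proof.
have [g fK gK] := hf; have [tau _ tauK] := hsigma.
split; first exact: (deriv_Qf_neq0 hP1.1 hP2 fK gK hstab).
exact: (coprimep_Sf hP1.1 hP2 fK gK hstab tauK).
Qed.
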